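(* Let $H$ be a finite simple graph on vertex set $\{x_1,\dots,x_n\}$ and $G=w(H)$, a graph on $2n$ vertices, and suppose $|E(G)|\ge n+1$. Let $\mathbb{K}$ be a field whose characteristic is a prime $p\neq 2$, let $A=A(G)$ be the Artinian algebra of $G$ over $\mathbb{K}$, and let $\ell=x_1+\dots+x_n+y_1+\dots+y_n$ be the sum of the variables. Then the multiplication map $\times\ell:A_i\to A_{i+1}$ has maximal rank (i.e. rank $\min\{\dim_{\mathbb{K}}A_i,\dim_{\mathbb{K}}A_{i+1}\}$) for $i=1$ and for $i=n-1$.
   Context: For a graph $H$ with vertex set $\{x_1,\dots,x_n\}$, the whiskered graph $w(H)$ has vertex set $\{x_1,\dots,x_n,y_1,\dots,y_n\}$ and edge set $E(H)\cup\{\{x_i,y_i\}: i=1,\dots,n\}$. For a graph $G$ on vertices $z_1,\dots,z_m$, its Artinian algebra over $\mathbb{K}$ is $A(G)=\mathbb{K}[z_1,\dots,z_m]/(\langle z_1^2,\dots,z_m^2\rangle+I(G))$, where $I(G)=\langle z_iz_j:\{z_i,z_j\}\in E(G)\rangle$ is the edge ideal; it is standard graded, $A=\bigoplus_i A_i$. *)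

From HB Require Import structures.
From mathcomp Require Import all_boot all_order all_algebra.
From mathcomp Require Import mpoly.
Set Implicit Arguments. Unset Strict Implicit. Unset Printing Implicit Defensive.
Import GRing.Theory.
Local Open Scope ring_scope.

Definition simple_graph (m : nat) (e : rel 'I_m) : Prop :=
  (forall u v, e u v = e v u) /\ (forall u, ~~ e u u).

Definition nedges (m : nat) (e : rel 'I_m) : nat :=
  #|[set uv : 'I_m * 'I_m | (uv.1 < uv.2)%N && e uv.1 uv.2]|.

(* Whiskered graph w(H): vertex lshift n i is x_i, rshift n i is y_i. *)
Definition whisker (n : nat) (e : rel 'I_n) : rel 'I_(n + n) :=
  fun u v =>
    match split u, split v with
    | inl i, inl j => e i j
    | inl i, inr j => i == j
    | inr i, inl j => i == j
    | inr _, inr _ => false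
    end.

Definition artin_gens (K : fieldType) (m : nat) (e : rel 'I_m)
  : seq {mpoly K[m]} :=
  [seq 'X_u ^+ 2 | u <- enum 'I_m] ++
  [seq 'X_uv.1 * 'X_uv.2 | uv <- enum [pred uv : 'I_m * 'I_m | e uv.1 uv.2]].

Definition in_ideal (K : fieldType) (m : nat) (gs : seq {mpoly K[m]})
  (p : {mpoly K[m]}) : Prop :=
  exists cs : 'I_(size gs) -> {mpoly K[m]},
    p = \sum_(j < size gs) cs j * gs`_j.

Definition indep_mod (K : fieldType) (m : nat) (gs : seq {mpoly K[m]})
  (r : nat) (s : 'I_r -> {mpoly K[m]}) : Prop :=
  forall c : 'I_r -> K,
    in_ideal gs (\sum_(j < r) c j *: s j) -> forall j, c j = 0.

(* [qdim gs P d]: the K-span of the classes of the elements of P in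
   K[z]/<gs> has dimension d (d = max size of an independent family). *)
Definition qdim (K : fieldType) (m : nat) (gs : seq {mpoly K[m]})
  (P : {mpoly K[m]} -> Prop) (d : nat) : Prop :=
  (exists s : 'I_d -> {mpoly K[m]}, (forall j, P (s j)) /\ indep_mod gs s) /\
  (forall s : 'I_d.+1 -> {mpoly K[m]}, (forall j, P (s j)) -> ~ indep_mod gs s).

(* dim_K A(G)_i = d  (A_i is the image of the degree-i forms). *)
Definition dimA (K : fieldType) (m : nat) (e : rel 'I_m) (i d : nat) : Prop :=
  qdim (artin_gens K e) (fun p => p \is i.-homog) d.

(* rank of the multiplication map  x l : A_i -> A_{i+1}  is r, i.e. the
   image  l * A_i  inside A_{i+1} has dimension r. *)
Definition rank_mul (K : fieldType) (m : nat) (e : rel 'I_m)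
  (l : {mpoly K[m]}) (i r : nat) : Prop :=
  qdim (artin_gens K e) (fun q => exists f, f \is i.-homog /\ q = l * f) r.

Definition max_rank_at (K : fieldType) (m : nat) (e : rel 'I_m)
  (l : {mpoly K[m]}) (i : nat) : Prop :=
  exists a b r, dimA K e i a /\ dimA K e i.+1 b /\ rank_mul e l i r /\ r = minn a b.

Definition sum_vars (K : fieldType) (m : nat) : {mpoly K[m]} :=
  \sum_(u < m) 'X_u.

From HB Require Import structures.
From mathcomp Require Import all_boot all_order all_algebra.
From mathcomp Require Import mpoly.
From mathcomp Require Import ring zify.
From Stdlib Require Import Classical.
Set Implicit Arguments. Unset Strict Implicit. Unset Printing Implicit Defensive.
Import GRing.Theory.
Local Open Scope ring_scope.

(* The ideal of A is generated by monomials: the squares z_u^2 and the edge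
   monomials z_u z_v.  A quotient dimension exists for every class of
   homogeneous polynomials of a fixed degree, and the rank of x l never
   exceeds the dimensions of source and target; so x l has maximal rank as
   soon as it is injective or surjective.

   - Degree 1 (n > 2, char K <> 2): x l : A_1 -> A_2 is injective.  The
     monomial z_a z_b of a non-edge survives in A, so if l g = 0 in A then
     g_a + g_b = 0 for every non-edge {a, b}; the y_i are pairwise
     non-adjacent, whence every g_(y_i) = 0, and then every g_(x_i) = 0.
   - Degree n - 1: x l : A_(n-1) -> A_n is surjective.  A monomial of
     degree n not in the ideal meets every whisker {x_i, y_i} exactly once;
     replacing its y's by x's one at a time modulo l A_(n-1) ends at
     x_1 ... x_n, which contains an edge of H.
   When n = 2 the two degrees coincide.  The hypothesis |E(w(H))| >= n + 1
   says exactly that H has an edge. *)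

Section IdealMembership.
Variables (K : fieldType) (m : nat) (gs : seq {mpoly K[m]}).
Local Notation I := (in_ideal gs).

Lemma in_ideal0 : I 0.
Proof. by exists (fun _ => 0); rewrite big1 // => j _; rewrite mul0r. Qed.

Lemma in_idealD p q : I p -> I q -> I (p + q).
Proof.
move=> [c1 ->] [c2 ->]; exists (fun j => c1 j + c2 j).
by rewrite -big_split; apply: eq_bigr => j _; rewrite mulrDl.
Qed.

Lemma in_idealMl q p : I p -> I (q * p).
Proof.
move=> [c ->]; exists (fun j => q * c j).
by rewrite mulr_sumr; apply: eq_bigr => j _; rewrite mulrA.
Qed.

Lemma in_idealZ c p : I p -> I (c *: p).
Proof. by move=> Ip; rewrite -mul_mpolyC; apply: in_idealMl. Qed.

Lemma in_idealN p : I p -> I (- p).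
Proof. by move=> Ip; rewrite -scaleN1r; apply: in_idealZ. Qed.

Lemma in_ideal_sum (J : finType) (P : pred J) (F : J -> {mpoly K[m]}) :
  (forall j, P j -> I (F j)) -> I (\sum_(j | P j) F j).
Proof. by apply: (big_ind I); [exact: in_ideal0 | exact: in_idealD]. Qed.

Lemma in_ideal_gen g : g \in gs -> I g.
Proof.
move=> gin; have hi : (index g gs < size gs)%N by rewrite index_mem.
exists (fun j => if j == Ordinal hi then 1 else 0).
rewrite (bigD1 (Ordinal hi)) //= eqxx mul1r nth_index // big1 ?addr0 //.
by move=> j /negbTE ->; rewrite mul0r.
Qed.

Lemma mcoeffMX_ndiv (p : {mpoly K[m]}) w mu :
  ~~ (w <= mu)%MM -> (p * 'X_[w])@_mu = 0.
Proof.
move=> hw; apply/eqP; rewrite mcoeff_eq0 (perm_mem (msuppMX _ _)).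
by apply/negP => /mapP [mu' _ def_mu]; move: hw; rewrite def_mu lem_addr.
Qed.

Lemma in_ideal_mcoeff0 (mu : 'X_{1..m}) p :
  (forall g, g \in gs -> exists w, g = 'X_[w] /\ ~~ (w <= mu)%MM) ->
  I p -> p@_mu = 0.
Proof.
move=> hgs [c ->]; rewrite raddf_sum big1 // => j _.
have [w [-> hw]] := hgs _ (mem_nth 0 (ltn_ord j)).
exact: mcoeffMX_ndiv.
Qed.

End IdealMembership.

Section QuotientDimension.
Variables (K : fieldType) (m : nat) (gs : seq {mpoly K[m]}).

Lemma qdim_indep_le (P : {mpoly K[m]} -> Prop) d k (s : 'I_k -> {mpoly K[m]}) :
  qdim gs P d -> (forall j, P (s j)) -> indep_mod gs s -> (k <= d)%N.
Proof.
move=> [_ no_bigger] Ps ind_s; rewrite leqNgt; apply/negP => lt_dk.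
apply: (no_bigger (fun j => s (widen_ord lt_dk j))) => [j|c hc j]; first exact: Ps.
pose c' (i : 'I_k) := if (i < d.+1)%N then c (inord i) else 0.
have sum_c' : \sum_(j < d.+1) c j *: s (widen_ord lt_dk j) = \sum_(i < k) c' i *: s i.
  rewrite (big_ord_widen_leq _ _ _ lt_dk) /=.
  rewrite [RHS](bigID (fun i : 'I_k => (i <= d)%N)) /= [X in _ = _ + X]big1 ?addr0.
    apply: eq_bigr => i hi; rewrite /c' ltnS hi; congr (_ *: s _).
    by apply: val_inj; rewrite /= inordK // ltnS.
  by move=> i /negbTE hi; rewrite /c' ltnS hi scale0r.
rewrite sum_c' in hc; have := ind_s c' hc (widen_ord lt_dk j).
by rewrite /c' /= ltn_ord inord_val.
Qed.

Lemma qdim_exists (P : {mpoly K[m]} -> Prop) B :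
  (forall k (s : 'I_k -> {mpoly K[m]}),
     (forall j, P (s j)) -> indep_mod gs s -> (k <= B)%N) ->
  exists d, qdim gs P d.
Proof.
move=> bounded; pose indep_of k :=
  exists s : 'I_k -> {mpoly K[m]}, (forall j, P (s j)) /\ indep_mod gs s.
suff grow : forall t k, (B - k)%N = t -> indep_of k -> exists d, qdim gs P d.
  by apply: (grow _ 0%N erefl); exists (fun _ => 0); split => [[]|c _ []].
elim=> [|t IH] k def_t ind_k.
  exists k; split => // s Ps ind_s.
  by have := bounded _ _ Ps ind_s; rewrite -subn_gt0 def_t.
have [ind_k1|no_k1] := classic (indep_of k.+1).
  by apply: (IH k.+1) => //; rewrite subnS def_t.
by exists k; split => // s Ps ind_s; apply: no_k1; exists s.
Qed.

(* Independent families of [D]-homogeneous polynomials are no larger than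
   the number of monomials of degree at most [D]: their coefficient
   vectors are linearly independent. *)
Lemma homog_indep_bound (P : {mpoly K[m]} -> Prop) D :
  (forall q, P q -> q \is D.-homog) ->
  forall k (s : 'I_k -> {mpoly K[m]}), (forall j, P (s j)) -> indep_mod gs s ->
  (k <= #|{: 'X_{1..m < D.+1}}|)%N.
Proof.
move=> homP k s Ps ind_s.
pose A : 'M[K]_(k, #|{: 'X_{1..m < D.+1}}|) :=
  \matrix_(j, t) (s j)@_(val (enum_val t)).
suff /eqP <- : row_free A by exact: rank_leq_col.
apply: inj_row_free => v vA0; apply/rowP => j0; rewrite mxE.
apply: ind_s; rewrite (_ : \sum_(j < k) v 0 j *: s j = 0); first exact: in_ideal0.
apply/mpolyP => mu; rewrite mcoeff0 raddf_sum /=.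
have [deg_mu|deg_mu] := eqVneq (mdeg mu) D; last first.
  rewrite big1 // => j _.
  by rewrite mcoeffZ (dhomog_nemf_coeff (homP _ (Ps j)) deg_mu) mulr0.
have small_mu : (mdeg mu < D.+1)%N by rewrite deg_mu.
transitivity ((v *m A) 0 (enum_rank (BMultinom small_mu))); last by rewrite vA0 mxE.
by rewrite mxE; apply: eq_bigr => j _; rewrite mcoeffZ !mxE enum_rankK.
Qed.

Lemma homog_qdim_exists (P : {mpoly K[m]} -> Prop) D :
  (forall q, P q -> q \is D.-homog) -> exists d, qdim gs P d.
Proof. by move=> homP; apply: qdim_exists; apply: homog_indep_bound homP. Qed.

Variables (l : {mpoly K[m]}) (i : nat).
Local Notation src := (fun p : {mpoly K[m]} => p \is i.-homog).
Local Notation tgt := (fun p : {mpoly K[m]} => p \is i.+1.-homog).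
Local Notation img := (fun q => exists f, f \is i.-homog /\ q = l * f).

Lemma rank_le_src a r : qdim gs src a -> qdim gs img r -> (r <= a)%N.
Proof.
move=> ha [[s [img_s ind_s]] _]; have [f hf] := fin_all_exists img_s.
apply: (qdim_indep_le ha (fun j => proj1 (hf j))) => c hc; apply: ind_s.
rewrite (eq_bigr (fun j => l * (c j *: f j))); last first.
  by move=> j _; rewrite (proj2 (hf j)) scalerAr.
by rewrite -mulr_sumr; apply: in_idealMl.
Qed.

Lemma rank_le_tgt b r : l \is 1.-homog ->
  qdim gs tgt b -> qdim gs img r -> (r <= b)%N.
Proof.
move=> hl hb [[s [img_s ind_s]] _]; apply: (qdim_indep_le hb _ ind_s) => j.
by have [f [hf ->]] := img_s j; exact: dhomogM hl hf.
Qed.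

End QuotientDimension.

Section MaxRankCriteria.
Variables (K : fieldType) (m : nat) (e : rel 'I_m) (l : {mpoly K[m]}) (i : nat).
Hypothesis l_linear : l \is 1.-homog.
Local Notation gs := (artin_gens K e).
Local Notation I := (in_ideal gs).

(* Since the rank never exceeds either dimension, maximal rank follows
   as soon as it reaches one of them. *)
Lemma max_rank_of_rank_ge :
  (forall a b r, dimA K e i a -> dimA K e i.+1 b -> rank_mul e l i r ->
     (a <= r)%N || (b <= r)%N) ->
  max_rank_at e l i.
Proof.
move=> reach.
have [a ha] := homog_qdim_exists gs (fun q (h : q \is i.-homog) => h).
have [b hb] := homog_qdim_exists gs (fun q (h : q \is i.+1.-homog) => h).
have [r hr] : exists r, rank_mul e l i r.
  by apply: (homog_qdim_exists gs (D := i.+1)) => _ [f [hf ->]]; exact: dhomogM l_linear hf.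
have ra := rank_le_src ha hr; have rb := rank_le_tgt l_linear hb hr.
exists a, b, r; do 3!split => //.
by case/orP: (reach _ _ _ ha hb hr) => [ar|br]; lia.
Qed.

Lemma max_rank_of_injective :
  (forall g, g \is i.-homog -> I (l * g) -> I g) -> max_rank_at e l i.
Proof.
move=> inj; apply: max_rank_of_rank_ge => a b r [[f [homf ind_f]] _] _ hr.
apply/orP; left; apply: (qdim_indep_le hr (s := fun j => l * f j)).
  by move=> j; exists (f j).
move=> c hc; apply: ind_f; apply: inj.
  by apply: rpred_sum => j _; apply/rpredZ/homf.
by rewrite mulr_sumr; under eq_bigr do rewrite -scalerAr.
Qed.

Lemma max_rank_of_surjective :
  (forall q, q \is i.+1.-homog -> exists f, f \is i.-homog /\ I (q - l * f)) ->
  max_rank_at e l i.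
Proof.
move=> surj; apply: max_rank_of_rank_ge => a b r _ [[q [homq ind_q]] _] hr.
apply/orP; right; have [f hf] := fin_all_exists (fun j => surj _ (homq j)).
apply: (qdim_indep_le hr (s := fun j => l * f j)).
  by move=> j; exists (f j); case: (hf j).
move=> c hc; apply: ind_q.
rewrite (eq_bigr (fun j => c j *: (q j - l * f j) + c j *: (l * f j))); last first.
  by move=> j _; rewrite -scalerDr subrK.
by rewrite big_split /=; apply: in_idealD => //; apply: in_ideal_sum => j _;
   apply: in_idealZ; case: (hf j).
Qed.

End MaxRankCriteria.

Section ArtinGenerators.
Variables (K : fieldType) (m : nat) (e : rel 'I_m).
Local Notation gs := (artin_gens K e).
Local Notation I := (in_ideal gs).

Lemma artin_gens_square u : 'X_[U_(u) + U_(u)] \in gs.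
Proof.
rewrite -[(_ + _)%MM]/(U_(u) *+ 2)%MM -mpolyXn mem_cat.
by apply/orP; left; apply/mapP; exists u; rewrite ?mem_enum.
Qed.

Lemma artin_gens_edge u v : e u v -> 'X_[U_(u) + U_(v)] \in gs.
Proof.
move=> huv; rewrite mpolyXD mem_cat.
by apply/orP; right; apply/mapP; exists (u, v); rewrite ?mem_enum.
Qed.

Lemma artin_gensP g : g \in gs ->
  exists u v, ((u == v) || e u v) /\ g = 'X_[U_(u) + U_(v)].
Proof.
rewrite mem_cat => /orP[/mapP[u _ ->]|/mapP[[u v] huv ->]].
  by exists u, u; rewrite eqxx mpolyXn.
by rewrite mem_enum inE /= in huv; exists u, v; rewrite mpolyXD huv orbT.
Qed.

Lemma in_ideal_monomial w mu : (w <= mu)%MM -> 'X_[w] \in gs -> I 'X_[mu].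
Proof. by move=> w_mu hw; rewrite -(submK w_mu) mpolyXD; apply/in_idealMl/in_ideal_gen. Qed.

Lemma lem_U2 (u v a b : 'I_m) : a != b -> (U_(u) + U_(v) <= U_(a) + U_(b))%MM ->
  ((u == a) && (v == b)) || ((u == b) && (v == a)).
Proof.
move=> ab /mnm_lepP le_uv; have := le_uv u; have := le_uv v.
rewrite !mnmDE !mnm1E !eqxx.
case/boolP: (u == a) => [/eqP-> | ua] hv hu /=.
  by rewrite eq_sym; move: hv; case: (b == v) => //; case: (a == v).
move: hv hu; case/boolP: (u == b) => [/eqP-> | ub] hv hu /=.
  by rewrite eq_sym; move: hv; case: (a == v) => //; case: (b == v).
by move: hu; rewrite ![_ == u]eq_sym (negbTE ua) (negbTE ub).
Qed.

Lemma in_ideal_nonedge_coef a b p : a != b -> ~~ e a b -> ~~ e b a ->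
  I p -> p@_(U_(a) + U_(b))%MM = 0.
Proof.
move=> ab nab nba; apply: in_ideal_mcoeff0 => g /artin_gensP [u [v [huv ->]]].
exists (U_(u) + U_(v))%MM; split => //; apply/negP => /(lem_U2 ab).
by case/orP=> /andP[/eqP eu /eqP ev]; move: huv; rewrite eu ev;
   [rewrite (negbTE ab) (negbTE nab) | rewrite eq_sym (negbTE ab) (negbTE nba)].
Qed.

Lemma mcoeff_sum_varsM a b (g : {mpoly K[m]}) : a != b ->
  (sum_vars K m * g)@_(U_(a) + U_(b))%MM = g@_U_(b) + g@_U_(a).
Proof.
move=> ab; rewrite /sum_vars mulr_suml raddf_sum (bigD1 a) //= (bigD1 b) 1?eq_sym //=.
rewrite big1 ?addr0; first by rewrite !(mulrC _ g) mcoeffMX addmC mcoeffMX.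
move=> u /andP[ub ua]; rewrite mulrC mcoeffMX_ndiv // lep1mP mnmDE !mnm1E.
by rewrite [a == u]eq_sym [b == u]eq_sym (negbTE ua) (negbTE ub).
Qed.

Lemma annihilated_coef_pair a b (g : {mpoly K[m]}) : a != b -> ~~ e a b -> ~~ e b a ->
  I (sum_vars K m * g) -> g@_U_(b) + g@_U_(a) = 0.
Proof. by move=> ab nab nba Ilg; rewrite -mcoeff_sum_varsM // in_ideal_nonedge_coef. Qed.

Lemma in_ideal_square_monomial u (mu : 'X_{1..m}) : (1 < mu u)%N -> I 'X_[mu].
Proof.
move=> mu_u; apply: (in_ideal_monomial _ (artin_gens_square u)).
by apply/mnm_lepP => x; rewrite mnmDE mnm1E; case: eqP => [<-|].
Qed.

Lemma in_ideal_edge_monomial u v (mu : 'X_{1..m}) : u != v -> e u v ->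
  (0 < mu u)%N -> (0 < mu v)%N -> I 'X_[mu].
Proof.
move=> uv huv mu_u mu_v; apply: (in_ideal_monomial _ (artin_gens_edge huv)).
apply/mnm_lepP => x; rewrite mnmDE !mnm1E.
have [<-|_] := eqVneq u x; first by rewrite eq_sym (negbTE uv) addn0.
by case: eqP => [<-|].
Qed.

End ArtinGenerators.

Lemma pairwise_sums_eq0 (K : fieldType) (c1 c2 c3 : K) : 2%:R != 0 :> K ->
  c1 + c2 = 0 -> c1 + c3 = 0 -> c2 + c3 = 0 -> c1 = 0.
Proof.
move=> two_neq0 s12 s13 s23.
have : c1 *+ 2 = 0.
  by rewrite mulr2n -[c1 + c1](addrK (c2 + c3)) addrACA s12 s13 s23 !add0r oppr0.
by move/eqP; rewrite -mulr_natr mulf_eq0 (negbTE two_neq0) orbF => /eqP.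
Qed.

Lemma two_others n (i : 'I_n) : (2 < n)%N ->
  exists j k : 'I_n, [&& j != i, k != i & j != k].
Proof.
move=> n_gt2; have n_gt0 := ltnW (ltnW n_gt2); have n_gt1 := ltnW n_gt2.
pose o0 := Ordinal n_gt0; pose o1 := Ordinal n_gt1; pose o2 := Ordinal n_gt2.
have [-> | i_o0] := eqVneq i o0; first by exists o1, o2.
have [-> | i_o1] := eqVneq i o1; first by exists o0, o2.
by exists o0, o1; rewrite !(eq_sym _ i) i_o0 i_o1.
Qed.

Section Whiskered.
Variables (K : fieldType) (n : nat) (H : rel 'I_n).
Local Notation e := (whisker H).
Local Notation I := (in_ideal (artin_gens K e)).
Local Notation ell := (sum_vars K (n + n)).
Local Notation vx := (@lshift n n).
Local Notation vy := (@rshift n n).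

Lemma whisker_xx i j : e (vx i) (vx j) = H i j.
Proof. by rewrite /whisker !(unsplitK (inl _ _)). Qed.

Lemma whisker_xy i j : e (vx i) (vy j) = (i == j).
Proof. by rewrite /whisker (unsplitK (inl _ _)) (unsplitK (inr _ _)). Qed.

Lemma whisker_yx i j : e (vy i) (vx j) = (i == j).
Proof. by rewrite /whisker (unsplitK (inl _ _)) (unsplitK (inr _ _)). Qed.

Lemma whisker_yy i j : e (vy i) (vy j) = false.
Proof. by rewrite /whisker !(unsplitK (inr _ _)). Qed.

(* Injectivity of [x l : A_1 -> A_2] when [n > 2] and [char K <> 2]: the
   [y_i] are pairwise non-adjacent, so the coefficients of the [y_i] in an
   annihilated linear form have pairwise zero sums, hence vanish; then the
   non-edges [{x_i, y_j}], [j <> i], kill the coefficients of the [x_i]. *)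
Lemma annihilated_linear_eq0 (g : {mpoly K[n + n]}) :
  2%:R != 0 :> K -> (2 < n)%N -> g \is 1.-homog -> I (ell * g) -> g = 0.
Proof.
move=> two_neq0 n_gt2 hg Ig.
have pair0 u v : u != v -> ~~ e u v -> ~~ e v u -> g@_U_(v) + g@_U_(u) = 0.
  by move=> uv nuv nvu; exact: annihilated_coef_pair uv nuv nvu Ig.
have yy i j : i != j -> g@_U_(vy j) + g@_U_(vy i) = 0.
  by move=> ij; apply: pair0; rewrite ?eq_rshift ?whisker_yy.
have coef_y i : g@_U_(vy i) = 0.
  have [j [k /and3P[ji ki jk]]] := two_others i n_gt2.
  apply: (pairwise_sums_eq0 (c2 := g@_U_(vy j)) (c3 := g@_U_(vy k))) => //.
  - exact: yy ji.
  - exact: yy ki.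
  - by apply: yy; rewrite eq_sym.
have coef_x i : g@_U_(vx i) = 0.
  have [j [_ /and3P[ji _ _]]] := two_others i n_gt2.
  have := pair0 (vx i) (vy j); rewrite eq_lrshift whisker_xy whisker_yx.
  by rewrite eq_sym (negbTE ji) coef_y add0r; apply.
apply/mpolyP => mu; rewrite mcoeff0.
have [mu_g|] := boolP (mu \in msupp g); last exact: memN_msupp_eq0.
have /eqP/mdeg1P[v /eqP ->] := dhomog_mf hg mu_g.
by case: (split_ordP v) => i ->.
Qed.

Definition lifts (q : {mpoly K[n + n]}) : Prop :=
  exists f, f \is n.-1.-homog /\ I (q - ell * f).

Lemma lifts_of_ideal q : I q -> lifts q.
Proof. by move=> Iq; exists 0; rewrite mulr0 subr0 rpred0. Qed.

Lemma liftsD q1 q2 : lifts q1 -> lifts q2 -> lifts (q1 + q2).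
Proof.
move=> [f1 [hf1 I1]] [f2 [hf2 I2]]; exists (f1 + f2); split; first exact: rpredD.
by rewrite mulrDr opprD addrACA; apply: in_idealD.
Qed.

Lemma liftsZ c q : lifts q -> lifts (c *: q).
Proof.
move=> [f [hf Iq]]; exists (c *: f); split; first exact: rpredZ.
by rewrite -scalerAr -scalerBr; apply: in_idealZ.
Qed.

Definition yweight (mu : 'X_{1..n + n}) : nat := \sum_(i < n) mu (vy i).

Lemma yweightD (mu1 mu2 : 'X_{1..n + n}) :
  yweight (mu1 + mu2) = (yweight mu1 + yweight mu2)%N.
Proof. by rewrite /yweight -big_split; apply: eq_bigr => i _; rewrite mnmDE. Qed.

Lemma yweightU_x k : yweight U_(vx k) = 0%N.
Proof. by rewrite /yweight big1 // => i _; rewrite mnm1E eq_lrshift. Qed.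

Lemma yweightU_y k : yweight U_(vy k) = 1%N.
Proof.
rewrite /yweight (bigD1 k) //= mnm1E eqxx big1 // => i ik.
by rewrite mnm1E eq_rshift eq_sym (negbTE ik).
Qed.

Lemma mdeg_whisker (mu : 'X_{1..n + n}) :
  mdeg mu = (\sum_(i < n) (mu (vx i) + mu (vy i)))%N.
Proof. by rewrite mdegE big_split_ord big_split. Qed.

Lemma in_ideal_heavy (mu : 'X_{1..n + n}) i :
  (1 < mu (vx i) + mu (vy i))%N -> I 'X_[mu].
Proof.
move=> heavy; have [x2|x1] := ltnP 1 (mu (vx i)).
  exact: in_ideal_square_monomial x2.
have [y2|y1] := ltnP 1 (mu (vy i)).
  exact: in_ideal_square_monomial y2.
apply: (@in_ideal_edge_monomial _ _ _ (vx i) (vy i)); rewrite ?eq_lrshift ?whisker_xy //;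
  lia.
Qed.

Lemma whisker_transversal (mu : 'X_{1..n + n}) : mdeg mu = n ->
  (forall i, mu (vx i) + mu (vy i) <= 1)%N ->
  forall i, (mu (vx i) + mu (vy i) = 1)%N.
Proof.
move=> deg_mu light i; have [_] := leqif_sum (fun i (_ : true) => leqif_eq (light i)).
rewrite -mdeg_whisker deg_mu sum1_card card_ord eqxx => /esym/forallP/(_ i).
by move/implyP/(_ isT)/eqP.
Qed.

Lemma transversal_mdeg (mu : 'X_{1..n + n}) :
  (forall i, mu (vx i) + mu (vy i) = 1)%N -> mdeg mu = n.
Proof.
move=> one_each; rewrite mdeg_whisker (eq_bigr (fun=> 1%N)) => [|i _].
  by rewrite sum1_card card_ord.
exact: one_each.
Qed.

Lemma swap_identity (T : 'X_{1..n + n}) k :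
  (forall i, i != k -> T (vx i) + T (vy i) = 1)%N ->
  I (ell * 'X_[T] - 'X_[U_(vx k) + T] - 'X_[U_(vy k) + T]).
Proof.
move=> one_each.
pose R : {mpoly K[n + n]} :=
  \sum_(i < n | i != k) ('X_[U_(vx i) + T] + 'X_[U_(vy i) + T]).
have -> : ell * 'X_[T] - 'X_[U_(vx k) + T] - 'X_[U_(vy k) + T] = R.
  rewrite /sum_vars big_split_ord mulrDl !mulr_suml -big_split /= (bigD1 k) //=.
  by rewrite /R -!mpolyXD; under eq_bigr do rewrite -!mpolyXD; ring.
rewrite /R; apply: in_ideal_sum => i ik; apply: in_idealD; apply: (in_ideal_heavy (i := i));
  by rewrite !mnmDE !mnm1E ?eq_lrshift ?eq_rlshift ?eq_rshift ?eq_lshift ?(negbTE ik)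
       ?eqxx addnACA one_each.
Qed.

Section EdgeOfH.
Variables (a b : 'I_n).
Hypotheses (ab : a != b) (hab : H a b).

Lemma transversal_lifts t (mu : 'X_{1..n + n}) :
  (forall i, mu (vx i) + mu (vy i) = 1)%N -> yweight mu = t -> lifts 'X_[mu].
Proof.
elim: t mu => [|t IH] mu one_each wt_mu.
  have y0 i : mu (vy i) = 0%N.
    by apply/eqP; rewrite -leqn0 -wt_mu /yweight (bigD1 i) //= leq_addr.
  have x1 i : mu (vx i) = 1%N by have := one_each i; rewrite y0 addn0.
  apply/lifts_of_ideal/(@in_ideal_edge_monomial _ _ _ (vx a) (vx b));
    by rewrite ?eq_lshift ?whisker_xx ?x1.
have [k /eqP yk] : exists k, mu (vy k) == 1%N.
  apply/existsP; apply: contraT => /existsPn no_y.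
  move: wt_mu; rewrite /yweight big1 // => i _.
  by have := one_each i; have := no_y i; lia.
set T := (mu - U_(vy k))%MM.
have def_mu : mu = (U_(vy k) + T)%MM by rewrite addmC submK // lep1mP yk.
have T_val u : T u = (mu u - (vy k == u))%N by rewrite mnmBE mnm1E.
have T_one i : i != k -> (T (vx i) + T (vy i) = 1)%N.
  by move=> ik; rewrite !T_val eq_rlshift eq_rshift eq_sym (negbTE ik) !subn0.
have [f [hf If]] : lifts 'X_[U_(vx k) + T].
  apply: IH => [i|].
    rewrite !mnmDE !mnm1E eq_lshift eq_lrshift.
    have [<- | ik] := eqVneq k i; last by rewrite T_one // eq_sym.
    by rewrite !T_val eq_rlshift eqxx yk; have := one_each k; lia.
  by move: wt_mu; rewrite def_mu !yweightD yweightU_x yweightU_y => -[].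
have deg_T : mdeg T = n.-1.
  have := transversal_mdeg one_each; rewrite def_mu mdegD mdeg1 add1n.
  by move/(congr1 predn).
exists ('X_[T] - f); split; first by rewrite rpredB // dhomogX /= deg_T.
have -> : 'X_[mu] - ell * ('X_[T] - f) = - ('X_[U_(vx k) + T] - ell * f)
    - (ell * 'X_[T] - 'X_[U_(vx k) + T] - 'X_[mu]) by ring.
apply: in_idealD; apply: in_idealN => //.
by rewrite def_mu; apply: swap_identity.
Qed.

(* Every monomial of degree [n] lifts: it is either 0 in [A] or transversal. *)
Lemma monomial_lifts (mu : 'X_{1..n + n}) : mdeg mu = n -> lifts 'X_[mu].
Proof.
move=> deg_mu.
have [/existsP [i heavy] | /existsPn light] :=
  boolP [exists i, (1 < mu (vx i) + mu (vy i))%N].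
  exact/lifts_of_ideal/(in_ideal_heavy heavy).
apply: (@transversal_lifts (yweight mu)) => //.
by apply: whisker_transversal deg_mu _ => i; rewrite leqNgt light.
Qed.

Lemma homog_top_lifts q : q \is n.-homog -> lifts q.
Proof.
move=> hq; rewrite [q]mpolyE big_seq; apply: (big_ind lifts).
- exact/lifts_of_ideal/in_ideal0.
- exact: liftsD.
- by move=> mu mu_q; apply/liftsZ/monomial_lifts; have := dhomog_mf hq mu_q.
Qed.

End EdgeOfH.

End Whiskered.

(* Without edges in [H], the only edges of [w(H)] are the [n] whiskers;
   so [|E(w(H))| >= n + 1] forces [H] to have an edge. *)
Lemma whisker_edge_of_H n (H : rel 'I_n) :
  (n.+1 <= nedges (whisker H))%N -> exists a b, H a b.
Proof.
move=> many; suff /existsP [a /existsP [b hab]] : [exists a, [exists b, H a b]].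
  by exists a, b.
apply: contraLR many => /existsPn noH; rewrite -leqNgt /nedges.
apply: leq_trans (_ : #|[set (lshift n i, rshift n i) | i : 'I_n]| <= n)%N; last first.
  by apply: leq_trans (leq_imset_card _ _) _; rewrite card_ord.
apply/subset_leq_card/subsetP => -[u v]; rewrite inE /= => /andP [lt_uv huv].
apply/imsetP; move: lt_uv huv.
case: (split_ordP u) => i ->; case: (split_ordP v) => j ->.
- by rewrite whisker_xx (negbTE (existsPn (noH i) j)).
- by rewrite whisker_xy => _ /eqP ->; exists j.
- by rewrite /= => lt_ji; move: lt_ji (ltn_ord j); lia.
- by rewrite whisker_yy.
Qed.

Lemma two_neq0_pchar (K : fieldType) p : p \in [pchar K] -> p != 2%N -> 2%:R != 0 :> K.
Proof.
move=> pK; rewrite -(dvdn_pcharf pK); apply: contra => p_dvd2.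
by have := prime_gt1 (pcharf_prime pK); have := dvdn_leq (isT : (0 < 2)%N) p_dvd2; lia.
Qed.

Theorem corollary3p3 (K : fieldType) (p : nat) (n : nat) (H : rel 'I_n) :
  prime p -> p != 2%N -> p \in [pchar K] ->
  simple_graph H ->
  (n.+1 <= nedges (whisker H))%N ->
  max_rank_at (whisker H) (sum_vars K (n + n)) 1 /\
  max_rank_at (whisker H) (sum_vars K (n + n)) n.-1.
Proof.
move=> _ p_neq2 pK [_ H_irr] many.
have [a [b hab]] := whisker_edge_of_H many.
have ab : a != b by apply: contraTneq hab => ->; exact: H_irr.
have n_gt1 : (1 < n)%N by have := max_card [set a; b]; rewrite cards2 ab card_ord.
have l_linear : sum_vars K (n + n) \is 1.-homog.
  by apply: rpred_sum => u _; rewrite dhomogX /= mdeg1.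
have top : max_rank_at (whisker H) (sum_vars K (n + n)) n.-1.
  apply: max_rank_of_surjective l_linear _ => q; rewrite prednK; last by lia.
  by move=> hq; have := homog_top_lifts ab hab hq.
split => //; have [n_eq2 | n_gt2] : n = 2%N \/ (2 < n)%N by lia.
  by rewrite [X in max_rank_at _ _ X](_ : _ = n.-1) // n_eq2.
apply: max_rank_of_injective l_linear _ => g hg Ig.
have two_neq0 := two_neq0_pchar pK p_neq2.
by rewrite (annihilated_linear_eq0 two_neq0 n_gt2 hg Ig); apply: in_ideal0.
Qed.
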